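(* Let $m,n,k$ be positive integers with $(m,k-1)=1$ and $n=\mathrm{ind}_m(k)$, let $G=G(m,n,k)=\langle a,b;\ a^m=1,\ b^n=1,\ b^{-1}ab=a^k\rangle$, let $S\subseteq\mathbb{Z}_m$ be a base and let $x\in S^*$. Then $\mathrm{orb}(x,S^* )$ is basic if and only if the $x$-family $\mathcal{F}_G(x,S)$ is complete.
   Context: $\mathrm{ind}_m(k)$ is the least positive integer $d$ with $k^d\equiv 1\pmod m$. Elements of $G$ are written uniquely as $a^ib^j$, $i\in\mathbb{Z}_m$, $j\in\mathbb{Z}_n$; $k_t=k^t-1\pmod m$. Maps are written on the right and composed left to right. For $x,y\in\mathbb{Z}_m$, $\mu(x,y):G\to G$ is $(a^ib^j)\mu(x,y)=a^{xik^j-yk_j}$, and $C(x,y)=\{\mu(x,yz):z\in\mathbb{Z}_m\}$. For $S\subseteq\mathbb{Z}_m$, $I(S)$ is the set of elements of $S$ invertible in $\mathbb{Z}_m$ and $S^*$ is the multiplicative subsemigroup of $\mathbb{Z}_m$ generated by $S$. A base is $S\subseteq \mathbb{Z}_m$ with $0\in S$ and $I(S)\ne\varnothing$. $\Sigma_G(S)$ is the semigroup under composition generated by $\{\mu(s,z):s\in S,z\in\mathbb{Z}_m\}$. For $x\in S^*$, $Y(x)=\{s^*z: s^*\in S^*, z\in\mathbb{Z}_m, \exists s\in S,\ x\equiv ss^*\pmod m\}$, $\mathcal{F}_G(x,S)=\{C(x,y):y\in Y(x)\}$, and $\mathcal{F}_G(x,S)$ is complete if $C(x,1)\in\mathcal{F}_G(x,S)$.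 The orbit of $x$ is $\mathrm{orb}(x,S^* )=\{xy: y\in I(S^* )\}$, and it is basic if $\mathrm{orb}(x,S^* )\cap S\neq\varnothing$. *)

From mathcomp Require Import all_boot all_algebra.
Set Implicit Arguments. Unset Strict Implicit. Unset Printing Implicit Defensive.
Import GRing.Theory Num.Theory.
Local Open Scope ring_scope.

(* Residues of Z_m are handled as integers compared modulo m;
   elements of Z_m that are "given" (elements of S, x, z) are ordinals 'I_m. *)

Definition eqm (m : nat) (a b : int) : Prop := modz a m%:Z = modz b m%:Z.

Definition is_ind (m k d : nat) : Prop :=
  (0 < d)%N /\ (k ^ d = 1 %[mod m])%N /\
  (forall e : nat, (0 < e)%N -> (e < d)%N -> (k ^ e <> 1 %[mod m])%N).

Definition inS (m : nat) (S : {set 'I_m}) (r : int) : Prop :=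
  exists2 s : 'I_m, s \in S & eqm m (s : nat)%:Z r.

Definition invm (m : nat) (r : int) : Prop := exists u : int, eqm m (r * u) 1.

Definition Sstar (m : nat) (S : {set 'I_m}) (r : int) : Prop :=
  exists s : seq 'I_m,
    [/\ s != [::], all (fun t => t \in S) s & eqm m (\prod_(t <- s) (t : nat)%:Z) r].

Definition base (m : nat) (S : {set 'I_m}) : Prop :=
  inS S 0 /\ exists r : int, inS S r /\ invm m r.

Definition in_orb (m : nat) (S : {set 'I_m}) (x r : int) : Prop :=
  exists y : int, [/\ Sstar S y, invm m y & eqm m r (x * y)].

Definition basic (m : nat) (S : {set 'I_m}) (x : int) : Prop :=
  exists r : int, in_orb S x r /\ inS S r.

Definition inY (m : nat) (S : {set 'I_m}) (x r : int) : Prop :=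
  exists sst : int, exists z : 'I_m,
    [/\ Sstar S sst,
        (exists2 s : 'I_m, s \in S & eqm m x ((s : nat)%:Z * sst))
      & eqm m r (sst * (z : nat)%:Z)].

(* The group G(m,n,k): its elements are written uniquely a^i b^j with
   i \in Z_m, j \in Z_n; we index them by the pair (i, j) : 'I_m * 'I_n.
   mu(x,y) : G -> G, a^i b^j |-> a^(x i k^j - y k_j), k_j = k^j - 1 (mod m).
   As its values lie in <a>, we record the exponent of a, reduced mod m. *)
Definition mu (m n k : nat) (x y : int) (g : 'I_m * 'I_n) : int :=
  modz (x * (g.1 : nat)%:Z * (k%:Z) ^+ g.2 - y * ((k%:Z) ^+ g.2 - 1)) m%:Z.

Definition Cset (m n k : nat) (x y : int) (f : 'I_m * 'I_n -> int) : Prop :=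
  exists z : 'I_m, f = @mu m n k x (y * (z : nat)%:Z).

(* F_G(x,S) = { C(x,y) : y \in Y(x) } is complete iff C(x,1) \in F_G(x,S),
   i.e. C(x,y) = C(x,1) (as sets of maps) for some y \in Y(x) *)
Definition complete (m n k : nat) (S : {set 'I_m}) (x : int) : Prop :=
  exists y : int, inY S x y /\ (forall f, @Cset m n k x y f <-> @Cset m n k x 1 f).

From mathcomp Require Import all_boot all_algebra.
From mathcomp Require cyclic.
From mathcomp Require Import ring.
From Stdlib Require Import FunctionalExtensionality.
Set Implicit Arguments. Unset Strict Implicit. Unset Printing Implicit Defensive.
Import GRing.Theory Num.Theory.
Local Open Scope ring_scope.

(* First, I(S^* ) is a group: an
   invertible y in S^* has finite multiplicative order (Euler), so its inverse
   is a positive power of y and lies in S^* again.  Second, C(x,y) depends only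
   on the ideal y Z_m: it equals C(x,1) when y is a unit, and conversely, as
   n > 1 (unless m = 1) and k - 1 is a unit, evaluating at b, where
   mu(x,t)(b) = -t(k-1), shows that mu(x,1) in C(x,y) forces y to be a unit.
   So F_G(x,S) is complete iff Y(x) contains a unit y = s^* z, where x = s s^*
   with s in S; then s^* is a unit and x (s^* )^-1 = s puts an element of S in
   the orbit of x. *)

Section Congruence.
Variable m : nat.

Lemma eqm_sym a b : eqm m a b -> eqm m b a.
Proof. exact: esym. Qed.

Lemma eqm_mul a a' b b' : eqm m a a' -> eqm m b b' -> eqm m (a * b) (a' * b').
Proof.
by rewrite /eqm => ea eb; rewrite -modzMml ea modzMml -modzMmr eb modzMmr.
Qed.

Lemma invm_coprime y : invm m y -> coprimez (y %% m)%Z m.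
Proof.
case=> u yu1; have : (m%:Z %| (y %% m)%Z * u - 1)%Z.
  by rewrite -eqz_mod_dvd modzMml; apply/eqP.
case/dvdzP=> q Eq; apply/coprimezP; exists (u, - q) => /=.
by rewrite mulrC mulNr -Eq; ring.
Qed.

Lemma eqm_expr_totient y : (0 < m)%N -> invm m y -> eqm m (y ^+ totient m) 1.
Proof.
move=> m_gt0 /invm_coprime; rewrite coprimezE => /cyclic.Euler_exp_totient.
have ym_ge0 : 0 <= (y %% m)%Z by apply: modz_ge0; rewrite eqz_nat -lt0n.
rewrite /eqm -modzXm -[(y %% m)%Z]gez0_abs // => Euler.
by rewrite -natz -natrX natz modz_nat Euler -modz_nat.
Qed.

End Congruence.

Section Semigroup.
Variables (m : nat) (S : {set 'I_m}).

Lemma Sstar_mul a b : Sstar S a -> Sstar S b -> Sstar S (a * b).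
Proof.
case=> s [s_nil sS Es] [t [_ tS Et]]; exists (s ++ t); split.
- by case: s s_nil {sS Es}.
- by rewrite all_cat sS tS.
- by rewrite big_cat; apply: eqm_mul.
Qed.

Lemma Sstar_expr a j : (0 < j)%N -> Sstar S a -> Sstar S (a ^+ j).
Proof.
case: j => // j _ Sa; elim: j => [|j IHj]; first by rewrite expr1.
by rewrite exprS; apply: Sstar_mul.
Qed.

(* S^* need not contain 1, so the inverse y^(phi m - 1) is replaced by the
   positive power y^(2 phi m - 1). *)
Lemma Sstar_inv y : (0 < m)%N -> Sstar S y -> invm m y ->
  exists w, [/\ Sstar S w, invm m w & eqm m (y * w) 1].
Proof.
move=> m_gt0 Sy uy; have phi_gt0 : (0 < totient m)%N by rewrite totient_gt0.
have dphi_gt0 : (0 < (totient m).*2)%N by rewrite double_gt0.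
have yw1 : eqm m (y * y ^+ (totient m).*2.-1) 1.
  rewrite -exprS prednK // -addnn exprD -[1](mulr1 1).
  by apply: eqm_mul; apply: eqm_expr_totient.
exists (y ^+ (totient m).*2.-1); split => //; last by exists y; rewrite mulrC.
apply: Sstar_expr => //; rewrite -ltnS prednK // -addnn.
exact: (leq_add phi_gt0 phi_gt0).
Qed.

End Semigroup.

Section Maps.
Variables m n k : nat.
Hypothesis m_gt0 : (0 < m)%N.

Lemma mu_eqm x a b : eqm m a b -> @mu m n k x a = @mu m n k x b.
Proof.
move=> Eab; apply: functional_extensionality => g; apply/eqP.
rewrite eqz_mod_dvd; set P := _ * _ * _; set Q := (_ - 1).
have -> : P - a * Q - (P - b * Q) = (b - a) * Q by ring.
by apply: dvdz_mulr; rewrite -eqz_mod_dvd Eab.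
Qed.

Lemma exists_ord_eqm t : exists z : 'I_m, eqm m t (z : nat)%:Z.
Proof.
have tm_ge0 : 0 <= (t %% m)%Z by apply: modz_ge0; rewrite eqz_nat -lt0n.
exists (@Ordinal m _ (ltn_pmod `|(t %% m)%Z| m_gt0)).
by rewrite /eqm /= -modz_nat gez0_abs // !modz_mod.
Qed.

Lemma Cset_invm x w : invm m w ->
  forall f, @Cset m n k x w f <-> @Cset m n k x 1 f.
Proof.
case=> u wu1 f; split; case=> z ->.
- have [z' Ez'] := exists_ord_eqm (w * (z : nat)%:Z).
  by exists z'; apply: mu_eqm; rewrite mul1r.
- have [z' Ez'] := exists_ord_eqm (u * (z : nat)%:Z).
  exists z'; apply: mu_eqm; rewrite mul1r /eqm -modzMmr -Ez' modzMmr mulrA.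
  by rewrite -modzMml wu1 modzMml mul1r.
Qed.

Lemma invm_of_Cset_mu1 x y : (1 < n)%N -> coprimez m (k%:Z - 1) ->
  @Cset m n k x y (@mu m n k x 1) -> invm m y.
Proof.
move=> n_gt1 cop [z /(congr1 (fun f => f (Ordinal m_gt0, Ordinal n_gt1)))].
rewrite /mu /= !expr1 !mulr0 !mul0r !add0r => /eqP; rewrite eqz_mod_dvd.
have -> : - (1 * (k%:Z - 1)) - - (y * (z : nat)%:Z * (k%:Z - 1))
   = (y * (z : nat)%:Z - 1) * (k%:Z - 1) by ring.
rewrite Gauss_dvdzl // -eqz_mod_dvd => /eqP yz1.
by exists (z : nat)%:Z.
Qed.

Lemma ind_gt1 : (1 < m)%N -> (0 < k)%N -> coprime m (k - 1) -> is_ind m k n ->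
  (1 < n)%N.
Proof.
move=> m_gt1 k_gt0 cop [n_gt0 [kn1 _]]; rewrite ltn_neqAle n_gt0 andbT.
apply/eqP=> n1; move/eqP: kn1; rewrite -n1 expn1 eqn_mod_dvd //.
move=> /coprime_dvdr/(_ cop); rewrite /coprime gcdnn => /eqP m1.
by rewrite m1 in m_gt1.
Qed.

Lemma invm_of_Cset1_sub x y : (0 < k)%N -> coprime m (k - 1) -> is_ind m k n ->
  (forall f, @Cset m n k x 1 f -> @Cset m n k x y f) -> invm m y.
Proof.
move=> k_gt0 cop ind C1y; have [m1 | m_gt1] := leqP m 1.
  have -> : m = 1%N by apply/eqP; rewrite eqn_leq m1.
  by exists 0; rewrite /eqm !modz1.
apply: invm_of_Cset_mu1; first exact: ind_gt1.
  by rewrite subzn // coprimezE.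
apply: C1y; have [z Ez] := exists_ord_eqm 1.
by exists z; apply: mu_eqm; rewrite mul1r.
Qed.

End Maps.

Section Orbit.
Variables (m n k : nat) (S : {set 'I_m}) (x : int).
Hypothesis m_gt0 : (0 < m)%N.

Lemma basic_complete : basic S x -> complete n k S x.
Proof.
case=> r [[y [Sy uy r_xy]] [s sS s_r]].
have [w [Sw uw yw1]] := Sstar_inv m_gt0 Sy uy.
exists w; split; last exact: Cset_invm.
have [z1 Ez1] := exists_ord_eqm m_gt0 1.
exists w, z1; split=> //.
  exists s => //; apply: eqm_sym.
  by rewrite /eqm -modzMml s_r r_xy modzMml -mulrA -modzMmr yw1 modzMmr mulr1.
by rewrite /eqm -modzMmr -Ez1 modzMmr mulr1.
Qed.

Lemma complete_basic : (0 < k)%N -> coprime m (k - 1) -> is_ind m k n ->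
  complete n k S x -> basic S x.
Proof.
move=> k_gt0 cop ind [y [[sst [z [Ssst [s sS x_ssst] y_sstz]]] Cy_C1]].
have [u yu1] := invm_of_Cset1_sub m_gt0 k_gt0 cop ind (fun f => (Cy_C1 f).2).
have usst : invm m sst.
  by exists ((z : nat)%:Z * u); rewrite /eqm mulrA -modzMml -y_sstz modzMml.
have [w [Sw uw sstw1]] := Sstar_inv m_gt0 Ssst usst.
exists (s : nat)%:Z; split; last by exists s.
exists w; split=> //.
by rewrite /eqm -modzMml x_ssst modzMml -mulrA -modzMmr sstw1 modzMmr mulr1.
Qed.

End Orbit.

Theorem theorem4p10 (m n k : nat) :
  (0 < m)%N -> (0 < n)%N -> (0 < k)%N ->
  coprime m (k - 1) -> is_ind m k n ->
  forall S : {set 'I_m}, base S ->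
  forall x : 'I_m, Sstar S (x : nat)%:Z ->
  (basic S (x : nat)%:Z <-> complete n k S (x : nat)%:Z).
Proof.
move=> m_gt0 _ k_gt0 cop ind S _ x _.
by split; [exact: basic_complete | exact: complete_basic].
Qed.
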